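(* Let $V$ be a finite set with positive element weights ($\vert A \vert$ = total weight of $A \subseteq V$), and let $\mathcal{P}, \mathcal{P}'$ be partitions of $V$ into nonempty parts. If an optimal $C_{\wedge}$-correspondence $(\mathcal{S}, \mathcal{S}')$ is not mutual, then $\vert \mathcal{S} \vert \in \{1, \vert \mathcal{P} \vert - 1\}$ or $\vert \mathcal{S}' \vert \in \{1, \vert \mathcal{P}' \vert - 1\}$.
   Context: For $\mathcal{S}$ a set of subsets of $V$, $U_{\mathcal{S}}$ is their union. A correspondence is a pair $(\mathcal{S}, \mathcal{S}')$ with $\mathcal{S} \subseteq \mathcal{P}$, $\mathcal{S}' \subseteq \mathcal{P}'$, with cost $\vert U_{\mathcal{S}} \triangle U_{\mathcal{S}'} \vert$. A $C_{\wedge}$-correspondence is one with $\mathcal{S} \notin \{\emptyset, \mathcal{P}\}$ and $\mathcal{S}' \notin \{\emptyset, \mathcal{P}'\}$; it is optimal if its cost is minimum among all $C_{\wedge}$-correspondences. A correspondence is mutual if (1) $\vert P \cap U_{\mathcal{S}'} \vert \ge \vert P \vert/2$ for all $P \in \mathcal{S}$, (2) $\vert P \cap U_{\mathcal{S}'} \vert \le \vert P \vert/2$ for all $P \in \mathcal{P} \setminus \mathcal{S}$, (3) $\vert P' \cap U_{\mathcal{S}} \vert \ge \vert P' \vert/2$ for all $P' \in \mathcal{S}'$, and (4) $\vert P' \cap U_{\mathcal{S}} \vert \le \vert P' \vert/2$ for all $P' \in \mathcal{P}' \setminus \mathcal{S}'$. *)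

From mathcomp Require Import all_boot all_order all_algebra.
Set Implicit Arguments. Unset Strict Implicit. Unset Printing Implicit Defensive.
Import Order.TTheory GRing.Theory Num.Theory.
Local Open Scope ring_scope.

Section Corr.
Variables (R : realFieldType) (V : finType) (w : V -> R).

Definition wt (A : {set V}) : R := \sum_(x in A) w x.

Definition U (S : {set {set V}}) : {set V} := cover S.

Definition cost (S S' : {set {set V}}) : R :=
  wt ((U S :\: U S') :|: (U S' :\: U S)).

Definition correspondence (P P' S S' : {set {set V}}) : Prop :=
  S \subset P /\ S' \subset P'.

Definition Cwedge_corr (P P' S S' : {set {set V}}) : Prop :=
  correspondence P P' S S' /\
  S != set0 /\ S != P /\ S' != set0 /\ S' != P'.

Definition optimal_Cwedge (P P' S S' : {set {set V}}) : Prop :=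
  Cwedge_corr P P' S S' /\
  forall T T', Cwedge_corr P P' T T' -> cost S S' <= cost T T'.

Definition mutual (P P' S S' : {set {set V}}) : Prop :=
  (forall X, X \in S -> wt X / 2 <= wt (X :&: U S')) /\
  (forall X, X \in P :\: S -> wt (X :&: U S') <= wt X / 2) /\
  (forall X, X \in S' -> wt X / 2 <= wt (X :&: U S)) /\
  (forall X, X \in P' :\: S' -> wt (X :&: U S) <= wt X / 2).
End Corr.

(** Say a part X of S has less than half its weight
    inside U_S'.  Dropping X from S changes the cost by |X| - 2|X ∩ U_S'| < 0,
    so S :\ X must fail to be a C_wedge side, i.e. |S| = 1.  Symmetrically,
    a part outside S with more than half its weight inside U_S' can be added
    unless |S| = |P| - 1, and the same holds for S' against U_S. *)

From mathcomp Require Import all_boot all_order all_algebra.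
From mathcomp Require Import lra.
Import Order.TTheory GRing.Theory Num.Theory.
Local Open Scope ring_scope.
Set Implicit Arguments.

Section Correspondence.
Variables (R : realFieldType) (V : finType) (w : V -> R).

Definition symd (A B : {set V}) : {set V} := (A :\: B) :|: (B :\: A).

Lemma symdC (A B : {set V}) : symd A B = symd B A.
Proof. by rewrite /symd setUC. Qed.

Lemma wtE (A : {set V}) : wt w A = \sum_x (if x \in A then w x else 0).
Proof. by rewrite /wt big_mkcond. Qed.

Lemma wtID (X B : {set V}) : wt w X = wt w (X :&: B) + wt w (X :\: B).
Proof.
rewrite !wtE -big_split; apply: eq_bigr => x _ /=; rewrite !inE.
by case: (x \in X); case: (x \in B); rewrite ?addr0 ?add0r.
Qed.

Lemma wt_symdU (A X B : {set V}) : [disjoint A & X] ->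
  wt w (symd (A :|: X) B) = wt w (symd A B) + wt w (X :\: B) - wt w (X :&: B).
Proof.
move=> dAX; rewrite !wtE -big_split -sumrB; apply: eq_bigr => x _ /=.
rewrite /symd !inE; case xA: (x \in A).
  by rewrite (disjointFr dAX xA); case: (x \in B); rewrite /= ?subr0 ?addr0.
by case: (x \in X); case: (x \in B);
  rewrite /= ?subr0 ?addr0 ?add0r ?subrr ?sub0r ?addrK.
Qed.

Section Parts.
Variables (P S : {set {set V}}).
Hypotheses (trivP : trivIset P) (sSP : S \subset P).

Lemma cover_setD1 (X : {set V}) : X \in S ->
  U (S :\ X) :|: X = U S /\ [disjoint U (S :\ X) & X].
Proof.
move=> XS; split; first by rewrite /U /cover (big_setD1 _ XS) /= setUC.
rewrite disjoint_sym; apply: bigcup_disjoint => Y; rewrite !inE => /andP [YX YS].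
by apply: (trivIsetP trivP); rewrite ?(subsetP sSP) // eq_sym.
Qed.

Lemma cover_setU1 (X : {set V}) : X \in P :\: S ->
  U S :|: X = U (X |: S) /\ [disjoint U S & X].
Proof.
rewrite inE => /andP [XnS XP]; split.
  by rewrite /U /cover (big_setU1 _ XnS) /= setUC.
rewrite disjoint_sym; apply: bigcup_disjoint => Y YS.
apply: (trivIsetP trivP) => //; first exact: (subsetP sSP).
by apply: contraNneq XnS => ->.
Qed.

Lemma half_le_wt_removed (X B : {set V}) : X \in S ->
  wt w (symd (U S) B) <= wt w (symd (U (S :\ X)) B) -> wt w X / 2 <= wt w (X :&: B).
Proof.
move=> XS; have [<- dX] := cover_setD1 XS.
rewrite wt_symdU // (wtID X B); lra.
Qed.

Lemma wt_added_le_half (X B : {set V}) : X \in P :\: S ->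
  wt w (symd (U S) B) <= wt w (symd (U (X |: S)) B) -> wt w (X :&: B) <= wt w X / 2.
Proof.
move=> XPS; have [<- dX] := cover_setU1 XPS.
rewrite wt_symdU // (wtID X B); lra.
Qed.

Definition proper_side (T : {set {set V}}) := [&& T \subset P, T != set0 & T != P].

Hypothesis sideS : proper_side S.

Lemma proper_side_setD1 (X : {set V}) : #|S| != 1%N -> X \in S ->
  proper_side (S :\ X).
Proof.
case/and3P: sideS => _ S0 SP card1 XS.
have ltSP : (#|S| < #|P|)%N by apply: proper_card; rewrite properEneq SP sSP.
rewrite /proper_side (subset_trans (subsetDl _ _) sSP) /=; apply/andP; split.
  by apply: contra card1 => /eqP S0'; rewrite (cardsD1 X S) XS S0' cards0.
by apply: contraTneq ltSP => <-; rewrite (cardsD1 X S) XS -leqNgt leq_addl.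
Qed.

Lemma proper_side_setU1 (X : {set V}) : #|S| != (#|P| - 1)%N -> X \in P :\: S ->
  proper_side (X |: S).
Proof.
case/and3P: sideS => _ _ SP cardP1; rewrite inE => /andP [XnS XP].
rewrite /proper_side subUset sub1set XP sSP; apply/and3P; split => //.
  by apply/set0Pn; exists X; rewrite setU11.
by apply: contra cardP1 => /eqP <-; rewrite cardsU1 XnS add1n subn1.
Qed.

Lemma locally_optimal_side_halves (B : {set V}) :
  #|S| != 1%N -> #|S| != (#|P| - 1)%N ->
  (forall T, proper_side T -> wt w (symd (U S) B) <= wt w (symd (U T) B)) ->
  (forall X, X \in S -> wt w X / 2 <= wt w (X :&: B)) /\
  (forall X, X \in P :\: S -> wt w (X :&: B) <= wt w X / 2).
Proof.
move=> card1 cardP1 opt; split => X XS.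
  exact: half_le_wt_removed XS (opt _ (proper_side_setD1 card1 XS)).
exact: wt_added_le_half XS (opt _ (proper_side_setU1 cardP1 XS)).
Qed.

End Parts.

Lemma Cwedge_corrE (P P' T T' : {set {set V}}) :
  Cwedge_corr P P' T T' <-> proper_side P T /\ proper_side P' T'.
Proof.
rewrite /Cwedge_corr /correspondence /proper_side; split.
  by case=> [[-> ->] [-> [-> [-> ->]]]].
by case=> /and3P [-> -> ->] /and3P [-> -> ->].
Qed.

End Correspondence.

Theorem proposition12 (R : realFieldType) (V : finType) (w : V -> R)
  (hw : forall x, 0 < w x)
  (P P' S S' : {set {set V}})
  (hP : partition P [set: V]) (hP' : partition P' [set: V])
  (hopt : optimal_Cwedge w P P' S S')
  (hnm : ~ mutual w P P' S S') :
  (#|S| = 1 \/ #|S| = #|P| - 1 \/ #|S'| = 1 \/ #|S'| = #|P'| - 1)%N.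
Proof.
case: (boolP [|| #|S| == 1, #|S| == #|P| - 1, #|S'| == 1 | #|S'| == #|P'| - 1]%N).
  by case/or4P => /eqP; tauto.
rewrite !negb_or => /and4P [card1 cardP1 card1' cardP1'].
case: hopt => /Cwedge_corrE [sideS sideS'] opt; exfalso; apply: hnm.
case/and3P: hP => _ trivP _; case/and3P: hP' => _ trivP' _.
have [sSP _] := andP sideS; have [sSP' _] := andP sideS'.
have optS T : proper_side P T -> wt w (symd (U S) (U S')) <= wt w (symd (U T) (U S')).
  by move=> sideT; apply: opt; apply/Cwedge_corrE.
have optS' T : proper_side P' T -> wt w (symd (U S') (U S)) <= wt w (symd (U T) (U S)).
  by move=> sideT; rewrite (symdC (U S')) (symdC (U T)); apply: opt; apply/Cwedge_corrE.
have [halfS halfPS] :=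
  @locally_optimal_side_halves _ _ w _ _ trivP sSP sideS (U S') card1 cardP1 optS.
have [halfS' halfPS'] :=
  @locally_optimal_side_halves _ _ w _ _ trivP' sSP' sideS' (U S) card1' cardP1' optS'.
by split; [|split; [|split]].
Qed.
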